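(* Let $A$ be a commutative ring, $r\ge1$, $B=A[x_1,\dots,x_r]$, let $k\ge1$ and $\alpha\in\mathbb{N}^r\setminus\{0\}$ with $\gcd(\alpha)$ invertible in $A$, and let $n\ge k|\alpha|$. If $a\in A$ satisfies $a\,\gamma^k(x^\alpha)\times\gamma^{n-k}(1)\in\Gamma^n_A(B)_{<k\alpha}$, then $a=0$.
   Context: $\Gamma^n_A(B)$ is identified with $\mathrm{TS}^n_A(B)=(B^{\otimes_A n})^{\mathfrak S_n}$ (componentwise multiplication). For a monomial $f$ and $0\le k\le n$, $\gamma^k(f)\times\gamma^{n-k}(1)=\sum_{S\subseteq\{1..n\},|S|=k}\bigotimes_{j}f_j$ with $f_j=f$ for $j\in S$ and $f_j=1$ otherwise. $B^{\otimes n}$ is $\mathbb{N}^r$-graded by giving $x^{\beta_1}\otimes\dots\otimes x^{\beta_n}$ multidegree $\beta_1+\dots+\beta_n$. $\beta<\gamma$ means $\beta\le\gamma$ componentwise and $\beta\ne\gamma$; $\Gamma^n_A(B)_{<\gamma}$ is the $A$-subalgebra generated by homogeneous elements of multidegree $<\gamma$. $|\alpha|=\sum\alpha_i$. *)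

From HB Require Import structures.
From mathcomp Require Import all_boot all_order all_algebra all_fingroup.
From mathcomp Require Import mpoly.
Set Implicit Arguments. Unset Strict Implicit. Unset Printing Implicit Defensive.
Import Order.TTheory GRing.Theory.
Local Open Scope ring_scope.

(* B = A[x_1..x_r];  B^{(x)_A n} is identified with the polynomial ring
   A[x_{j,i} : j < n, i < r] = {mpoly A[n*r]}, where the tensor factor j
   carries the variables x_{j,1..r}.  The variable x_{j,i} is 'X_(var j i). *)
Definition var (n r : nat) (j : 'I_n) (i : 'I_r) : 'I_(n * r) := mxvec_index j i.

Definition unvar (n r : nat) (v : 'I_(n * r)) : 'I_n * 'I_r :=
  enum_val (cast_ord (esym (mxvec_cast n r)) v).

Definition blockperm (n r : nat) (s : 'S_n) (v : 'I_(n * r)) : 'I_(n * r) :=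
  var (s (unvar v).1) (unvar v).2.

(* TS^n_A(B) = (B^{(x) n})^{S_n}: invariance under all block permutations
   (the algebra automorphisms x_{j,i} |-> x_{s j, i}). *)
Definition symmetric_tensor (A : comNzRingType) (n r : nat) (f : {mpoly A[n * r]}) : Prop :=
  forall s : 'S_n, f \mPo [tuple 'X_(blockperm s v) | v < n * r] = f.

Definition mdegr (n r : nat) (m : 'X_{1..n * r}) (i : 'I_r) : nat :=
  (\sum_(j < n) m (var j i))%N.

Definition homog_of (A : comNzRingType) (n r : nat) (d : 'I_r -> nat)
    (f : {mpoly A[n * r]}) : Prop :=
  forall m, m \in msupp f -> forall i, mdegr m i = d i.

Definition ltmdeg (r : nat) (b g : 'I_r -> nat) : Prop :=
  (forall i, (b i <= g i)%N) /\ (exists i, b i != g i).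

Inductive in_subalg (A : comNzRingType) (N : nat) (P : {mpoly A[N]} -> Prop)
  : {mpoly A[N]} -> Prop :=
| subalg_gen f : P f -> in_subalg P f
| subalg_cst c : in_subalg P (c%:MP)
| subalg_add f g : in_subalg P f -> in_subalg P g -> in_subalg P (f + g)
| subalg_mul f g : in_subalg P f -> in_subalg P g -> in_subalg P (f * g).

(* Gamma^n_A(B)_{< g}: the A-subalgebra generated by the homogeneous elements
   of Gamma^n_A(B) = TS^n_A(B) of multidegree < g *)
Definition Gamma_lt (A : comNzRingType) (n r : nat) (g : 'I_r -> nat)
    (f : {mpoly A[n * r]}) : Prop :=
  in_subalg (fun h => symmetric_tensor h /\
                      exists d, ltmdeg d g /\ homog_of d h) f.

(* gamma^k(x^alpha) x gamma^{n-k}(1)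
   = sum_{S subset {1..n}, |S| = k} (x)_j f_j, f_j = x^alpha if j in S, 1 else *)
Definition gamma_prod (A : comNzRingType) (n r k : nat) (alpha : 'I_r -> nat)
    : {mpoly A[n * r]} :=
  \sum_(S : {set 'I_n} | #|S| == k)
     \prod_(j in S) \prod_(i < r) 'X_(var j i) ^+ alpha i.

(* Fix i0 and put M := k |alpha|.  Evaluate x_(j,i) at X (1 + Y)^[(j,i) = (j0,i0)] z_j, where
   z_j = Z^j for j < M, i.e. the M-th roots of unity in A[Z]/(Phi_M), and z_j = 0 for j >= M;
   let lambda(P) be the coefficient of X^M Y.  For a symmetric tensor P and 0 < a < M, the
   coefficient of X^a Y^0 is a polynomial without constant term in the elementary symmetric
   functions of degree <= a of the z_j, which all vanish modulo Phi_M.  Hence, by the Leibniz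
   rule, lambda(PQ) = P(0) lambda(Q) + lambda(P) Q(0) modulo Phi_M on symmetric tensors; as
   constants and homogeneous elements of multidegree < k alpha (so of total degree < M) have
   lambda = 0, lambda vanishes modulo Phi_M on Gamma_{<k alpha}.  But the image of
   gamma^k(x^alpha) x gamma^(n-k)(1) is +- alpha_(i0) modulo Phi_M, so a alpha_(i0) = 0 for all
   i0, and a = 0 since gcd(alpha) is invertible. *)

From HB Require Import structures.
From mathcomp Require Import all_boot all_order all_algebra all_fingroup all_field.
From mathcomp Require Import mpoly zify.
Set Implicit Arguments. Unset Strict Implicit. Unset Printing Implicit Defensive.
Import GRing.Theory Pdiv.Ring.
Local Open Scope ring_scope.

(** * Divisibility by a monic polynomial *)

Section MonicDivisibility.
Variables (R : comNzRingType) (d : {poly R}).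
Hypothesis monic_d : d \is monic.

Lemma rdvdp_add p q : rdvdp d p -> rdvdp d q -> rdvdp d (p + q).
Proof.
by rewrite /rdvdp (Pdiv.RingMonic.rmodpD monic_d) => /eqP-> /eqP->; rewrite addr0.
Qed.

Lemma rdvdp_opp p : rdvdp d p -> rdvdp d (- p).
Proof. by rewrite /rdvdp (Pdiv.RingMonic.rmodpN monic_d) => /eqP->; rewrite oppr0. Qed.

Lemma rdvdp_mull p q : rdvdp d p -> rdvdp d (q * p).
Proof.
by rewrite /rdvdp -(Pdiv.RingMonic.rmodp_mulmr monic_d) => /eqP->; rewrite mulr0 rmod0p.
Qed.

Lemma rdvdp_mulr p q : rdvdp d p -> rdvdp d (p * q).
Proof. by rewrite mulrC; apply: rdvdp_mull. Qed.

Lemma rdvdp_sum (I : Type) (s : seq I) (P : pred I) (F : I -> {poly R}) :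
  (forall i, P i -> rdvdp d (F i)) -> rdvdp d (\sum_(i <- s | P i) F i).
Proof.
move=> dF; elim/big_rec: _ => [|i p Pi dp]; first exact: rdvdp0.
exact: rdvdp_add (dF i Pi) dp.
Qed.

Lemma rdvdp_polyC c : (1 < size d)%N -> rdvdp d c%:P -> c = 0.
Proof.
move=> d_gt1; rewrite /rdvdp rmodp_small => [/eqP/polyP/(_ 0%N)|].
  by rewrite coefC coef0.
exact: leq_ltn_trans (size_polyC_leq1 c) d_gt1.
Qed.

End MonicDivisibility.

(** * Elementary symmetric functions *)

Section ElementarySymmetric.
Variables (R : comNzRingType) (n : nat).
Implicit Types (x y : 'I_n -> R).

Definition elem_sym x l : R := \sum_(S : {set 'I_n} | #|S| == l) \prod_(j in S) x j.

Definition elem_sym_at x j0 l : R :=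
  \sum_(S : {set 'I_n} | (#|S| == l) && (j0 \in S)) \prod_(j in S) x j.

Lemma eq_elem_sym x y l : x =1 y -> elem_sym x l = elem_sym y l.
Proof. by move=> exy; apply: eq_bigr => S _; apply: eq_bigr => j _; rewrite exy. Qed.

Lemma elem_sym0 x : elem_sym x 0 = 1.
Proof. by rewrite /elem_sym (big_pred1 set0) ?big_set0 // => S; rewrite cards_eq0. Qed.

Lemma elem_sym_scale c x l : elem_sym (fun j => c * x j) l = c ^+ l * elem_sym x l.
Proof.
rewrite /elem_sym mulr_sumr; apply: eq_bigr => S /eqP cardS.
by rewrite big_split /= prodr_const cardS.
Qed.

Lemma elem_sym_at0 x j0 : elem_sym_at x j0 0 = 0.
Proof.
rewrite /elem_sym_at big_pred0 // => S; rewrite cards_eq0.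
by case: eqP => // ->; rewrite in_set0.
Qed.

Lemma elem_sym_atS x j0 l :
  elem_sym_at x j0 l.+1 = x j0 * (elem_sym x l - elem_sym_at x j0 l).
Proof.
rewrite /elem_sym (bigID (fun S : {set 'I_n} => j0 \in S)) /= -/(elem_sym_at x j0 l).
rewrite addrAC subrr add0r /elem_sym_at mulr_sumr.
rewrite (reindex_onto (fun S => j0 |: S) (fun S => S :\ j0)) /=; last first.
  by move=> S /andP[_ j0S]; rewrite setD1K.
apply: eq_big => [S|S /andP[_ /eqP S_eq]]; last first.
  by rewrite big_setU1 // -S_eq !inE eqxx.
rewrite setU11 andbT cardsU1; case j0S: (j0 \in S) => /=.
  rewrite andbF; apply/negbTE/nandP; right; apply/eqP => S_eq.
  by move: j0S; rewrite -S_eq !inE eqxx.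
by rewrite setU1K ?j0S // eqxx andbT add1n eqSS.
Qed.

End ElementarySymmetric.

Lemma rmorph_elem_sym (R S : comNzRingType) (f : {rmorphism R -> S}) n (x : 'I_n -> R) l :
  f (elem_sym x l) = elem_sym (f \o x) l.
Proof. by rewrite rmorph_sum; apply: eq_bigr => T _; rewrite rmorph_prod. Qed.

Lemma mmap_mesym (R S : comNzRingType) (f : {rmorphism R -> S}) n (h : 'I_n -> S) l :
  mmap f h (mesym n R l) = elem_sym h l.
Proof.
rewrite mesymE rmorph_sum; apply: eq_bigr => T _.
change (mmap f h 'X_[mesym1 T] = \prod_(j in T) h j).
rewrite mmapX /mmap1 [RHS]big_mkcond /=; apply: eq_bigr => i _.
by rewrite mnmE; case: (i \in T).
Qed.

(** * Substitution in multivariate polynomials *)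

Lemma eq_mmap (R S : nzRingType) N (f1 f2 : R -> S) (h1 h2 : 'I_N -> S) (p : {mpoly R[N]}) :
  f1 =1 f2 -> h1 =1 h2 -> mmap f1 h1 p = mmap f2 h2 p.
Proof.
move=> ef eh; apply: eq_bigr => m _; rewrite ef; congr (_ * _).
exact: mmap1_eq.
Qed.

Lemma mmapXU (R S : comNzRingType) N (f : {rmorphism R -> S}) (h : 'I_N -> S) i :
  mmap f h 'X_i = h i.
Proof. by rewrite mmapX mmap1U. Qed.

Lemma rmorph_mmap (R S T : comNzRingType) N (f : R -> S) (h : 'I_N -> S)
    (g : {rmorphism S -> T}) (p : {mpoly R[N]}) :
  g (mmap f h p) = mmap (g \o f) (g \o h) p.
Proof.
rewrite rmorph_sum; apply: eq_bigr => m _; rewrite rmorphM /=; congr (_ * _).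
by rewrite rmorph_prod; apply: eq_bigr => i _; rewrite rmorphXn.
Qed.

Lemma mmap_comp (R S : comNzRingType) N K (f : {rmorphism R -> S}) (h : 'I_K -> S)
    (lq : N.-tuple {mpoly R[K]}) (p : {mpoly R[N]}) :
  mmap f h (p \mPo lq) = mmap f (fun i => mmap f h (tnth lq i)) p.
Proof.
have -> : p \mPo lq = \sum_(m <- msupp p) (p@_m)%:MP * mmap1 (tnth lq) m by [].
rewrite rmorph_sum; apply: eq_bigr => m _.
rewrite rmorphM /= mmapC; congr (_ * _).
by rewrite rmorph_prod; apply: eq_bigr => i _; rewrite rmorphXn.
Qed.

Lemma mmap1_weighted (R : comNzRingType) N (e : 'I_N -> nat) (y : 'I_N -> R)
    (h : 'I_N -> {poly R}) (m : 'X_{1..N}) :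
  (forall i, h i = 'X^(e i) * (y i)%:P) ->
  mmap1 h m = 'X^(\sum_i e i * m i)%N * (\prod_i y i ^+ m i)%:P.
Proof.
move=> eh; rewrite /mmap1 rmorph_prod -prodrXr -big_split /=.
by apply: eq_bigr => i _; rewrite eh exprMn rmorphXn /= -exprM mulnC.
Qed.

(** * Roots of unity modulo cyclotomic polynomials *)

Lemma Cyclotomic_rdvdp_int M (z : algC) (p : {poly int}) :
  M.-primitive_root z -> root (map_poly intr p) z -> rdvdp 'Phi_M p.
Proof.
move=> prim_z pz; have monic_Phi := Cyclotomic_monic M.
set q := rmodp p 'Phi_M; apply/eqP.
have qz : root (map_poly (intr : int -> algC) q) z.
  move: pz; rewrite {1}(Pdiv.RingMonic.rdivp_eq monic_Phi p) rmorphD rmorphM /=.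
  rewrite !rootE hornerD hornerM (Cintr_Cyclotomic prim_z).
  have := root_cyclotomic prim_z z; rewrite prim_z => /rootP ->.
  by rewrite mulr0 add0r.
(* The remainder vanishes at z but is shorter than the minimal polynomial of z. *)
have lt_q_Phi : (size q < size 'Phi_M)%N by rewrite ltn_rmodpN0 // monic_neq0.
have [pz_min [Dmin _] min_dvd] := minCpolyP z.
have size_min : size pz_min = size 'Phi_M.
  rewrite -(size_map_poly (ratr : {rmorphism rat -> algC})) -Dmin.
  rewrite (minCpoly_cyclotomic prim_z) -(Cintr_Cyclotomic prim_z).
  by rewrite size_map_inj_poly //; apply: intr_inj.
have size_qQ : size (map_poly (intr : int -> rat) q) = size q.
  by rewrite size_map_inj_poly //; apply: intr_inj.
have : (pz_min %| map_poly (intr : int -> rat) q)%R.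
  rewrite -min_dvd -map_poly_comp (eq_map_poly (g := intr)) //.
  by move=> c /=; rewrite rmorph_int.
have [q0 _|qQ_neq0 /(dvdp_leq qQ_neq0)] := eqVneq (map_poly (intr : int -> rat) q) 0.
  by apply/eqP; rewrite -size_poly_eq0 -size_qQ q0 size_poly0.
by rewrite size_min size_qQ leqNgt lt_q_Phi.
Qed.

Lemma monic_Cyclotomic_map (A : nzRingType) M : map_poly (intr : int -> A) 'Phi_M \is monic.
Proof. exact/monic_map/Cyclotomic_monic. Qed.

Lemma size_Cyclotomic_map_gt1 (A : nzRingType) M : (0 < M)%N ->
  (1 < size (map_poly (intr : int -> A) 'Phi_M))%N.
Proof.
move=> M_gt0; rewrite size_map_poly_id0; last first.
  by rewrite (monicP (Cyclotomic_monic M)) rmorph1 oner_neq0.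
by rewrite size_Cyclotomic ltnS totient_gt0.
Qed.

Lemma elem_sym_prim_root_eq0 n M (z : algC) l : M.-primitive_root z -> (M <= n)%N ->
  (0 < l < M)%N -> elem_sym (fun j : 'I_n => if (j < M)%N then z ^+ j else 0) l = 0.
Proof.
move=> prim_z leMn /andP[l_gt0 ltlM]; set x := fun j : 'I_n => _.
have ltln : (l < n.+1)%N by lia.
have := mroots_coeff [tuple x j | j < n] (Ordinal ltln).
rewrite big_tuple /meval mmap_mesym /=.
have -> : \prod_(j < n) ('X - (tnth [tuple x j | j < n] j)%:P) = 'X^n - 'X^(n - M).
  pose F j : {poly algC} := 'X - (if (j < M)%N then z ^+ j else 0)%:P.
  rewrite (eq_bigr (fun j : 'I_n => F j)) => [|j _]; last by rewrite tnth_mktuple.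
  rewrite -(big_mkord xpredT F) (@big_cat_nat _ _ _ M) // /=.
  rewrite (@eq_big_nat _ _ _ 0 M _ (fun j => 'X - (z ^+ j)%:P)); last first.
    by move=> j /andP[_ ltjM]; rewrite /F ltjM.
  rewrite (factor_Xn_sub_1 prim_z) (@eq_big_nat _ _ _ M n _ (fun => 'X)); last first.
    by move=> j /andP[leMj _]; rewrite /F ltnNge leMj /= subr0.
  by rewrite prodr_const_nat mulrBl mul1r -exprD subnKC.
rewrite coefB !coefXn; have -> : (n - l == n)%N = false by apply/eqP; lia.
have -> : (n - l == n - M)%N = false by apply/eqP; lia.
rewrite subrr => /esym/eqP; rewrite mulf_eq0 signr_eq0 /= => /eqP <-.
by apply: eq_elem_sym => j; rewrite tnth_mktuple.
Qed.

(* Over [A[Z]/(Phi_M)], the [padded_root M j] are the [M]-th roots of unity followed by zeros. *)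
Definition padded_root (R : nzRingType) (M j : nat) : {poly R} :=
  if (j < M)%N then 'X^j else 0.

Lemma Cyclotomic_rdvdp_elem_sym (A : comNzRingType) n M l : (M <= n)%N -> (0 < l < M)%N ->
  rdvdp (map_poly (intr : int -> A) 'Phi_M) (elem_sym (fun j : 'I_n => padded_root A M j) l).
Proof.
move=> leMn /andP[l_gt0 ltlM].
have [z prim_z] := C_prim_root_exists (leq_ltn_trans (leq0n l) ltlM).
have /(Pdiv.RingMonic.rdvdpP (Cyclotomic_monic M)) [q Eq] :
    rdvdp 'Phi_M (elem_sym (fun j : 'I_n => padded_root int M j) l).
  apply: (Cyclotomic_rdvdp_int prim_z).
  rewrite rootE -[_.[z]]/((horner_eval z \o map_poly intr) _) rmorph_elem_sym; apply/eqP.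
  rewrite -[RHS](elem_sym_prim_root_eq0 (n := n) (l := l) prim_z leMn); last by rewrite l_gt0.
  apply: eq_elem_sym => j /=; rewrite /padded_root /horner_eval.
  by case: ifP => _; rewrite ?map_polyXn ?hornerXn // raddf0 horner0.
apply: (@Pdiv.RingMonic.eq_rdvdp _ _ (monic_Cyclotomic_map A M) (map_poly intr q)).
rewrite -rmorphM /= -Eq rmorph_elem_sym; apply: eq_elem_sym => j /=.
by rewrite /padded_root; case: ifP; rewrite ?map_polyXn ?raddf0.
Qed.

Section SymmetricAtPaddedRoots.
Variables (A : comNzRingType) (n M : nat).
Hypothesis leMn : (M <= n)%N.
Local Notation Phi := (map_poly (intr : int -> A) 'Phi_M).

Definition graded_roots (j : 'I_n) : {poly {poly A}} := 'X * (padded_root A M j)%:P.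

Lemma Cyclotomic_rdvdp_coef_sym (p : {mpoly A[n]}) a : p \is symmetric -> (0 < a < M)%N ->
  rdvdp Phi ((mmap (polyC \o polyC) graded_roots p)`_a).
Proof.
move=> sym_p /andP[a_gt0 ltaM]; have monic_Phi := monic_Cyclotomic_map A M.
(* Write p as a polynomial in the e_l: X^a only meets monomials in e_l with 0 < l <= a < M. *)
have [t [<- _]] := sym_fundamental sym_p; rewrite mmap_comp.
pose e (i : 'I_n) := @elem_sym _ n (fun j => padded_root A M j) i.+1.
rewrite [mmap _ _ t]/mmap coef_sum; apply: (rdvdp_sum monic_Phi) => m _.
rewrite coefCM; apply: (rdvdp_mull monic_Phi).
rewrite (@mmap1_weighted _ _ (fun i : 'I_n => i.+1) e) => [|i]; last first.
  by rewrite tnth_mktuple mmap_mesym elem_sym_scale -rmorph_elem_sym.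
rewrite coefXnM coefC; case: ltnP => [_|le_w_a]; first exact: rdvdp0.
case: eqP => [w_a|_]; last exact: rdvdp0.
have {}w_a : (\sum_(i < n) i.+1 * m i = a)%N.
  by apply/eqP; rewrite eqn_leq le_w_a -subn_eq0 w_a.
have [i m_i] : exists i : 'I_n, (0 < m i)%N.
  apply/existsP; apply: contraTT a_gt0 => /existsPn m0.
  rewrite -w_a big1 // => i _; move: (m0 i); rewrite lt0n negbK => /eqP ->.
  by rewrite muln0.
have ltiM : (i.+1 < M)%N.
  apply: leq_ltn_trans ltaM; rewrite -w_a (bigD1 i) //= (leq_trans _ (leq_addr _ _)) //.
  by rewrite leq_pmulr.
rewrite (bigD1 i) //= -(prednK m_i) exprS -mulrA; apply: (rdvdp_mulr monic_Phi).
exact: Cyclotomic_rdvdp_elem_sym.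
Qed.

End SymmetricAtPaddedRoots.

Lemma Cyclotomic_rdvdp_elem_sym_pow (A : comNzRingType) n M q l : (M <= n)%N ->
  (0 < q * l < M)%N ->
  rdvdp (map_poly (intr : int -> A) 'Phi_M)
        (elem_sym (fun j : 'I_n => padded_root A M j ^+ q) l).
Proof.
move=> leMn qlM; set p := mesym n A l \mPo [tuple 'X_j ^+ q | j < n].
have sym_p : p \is symmetric.
  apply/issymP => s; rewrite /msym /p mmap_comp.
  rewrite -{2}(issymP _ (mesym_sym n A l) s) msym_mPo /comp_mpoly.
  by apply: eq_mmap => // j; rewrite !tnth_mktuple rmorphXn /= mmapXU.
have := Cyclotomic_rdvdp_coef_sym leMn sym_p qlM.
rewrite /p mmap_comp (eq_mmap (f2 := polyC \o polyC)
  (h2 := fun j => 'X^q * (padded_root A M j ^+ q)%:P)) //.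
  by rewrite mmap_mesym elem_sym_scale -exprM -rmorph_elem_sym coefXnM ltnn subnn coefC.
by move=> j; rewrite tnth_mktuple rmorphXn /= mmapXU /graded_roots exprMn rmorphXn.
Qed.

Lemma rdvdp_elem_sym_at_sign (R : comNzRingType) (d : {poly R}) n (x : 'I_n -> {poly R})
    j0 k :
  d \is monic -> x j0 = 1 -> (0 < k)%N ->
  (forall l, (0 < l < k)%N -> rdvdp d (elem_sym x l)) ->
  rdvdp d (elem_sym_at x j0 k - (-1) ^+ k.-1).
Proof.
move=> monic_d x_j0; case: k => // k _ /=.
elim: k => [|l IHl] d_esym.
  by rewrite elem_sym_atS x_j0 mul1r elem_sym0 elem_sym_at0 subr0 subrr rdvdp0.
rewrite elem_sym_atS x_j0 mul1r exprS mulN1r opprK -addrA [- _ + _]addrC -opprB.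
apply: (rdvdp_add monic_d); first by apply: d_esym; rewrite /= ltnS.
apply: (rdvdp_opp monic_d); apply: IHl => l' /andP[l'_gt0 ltl'l].
by apply: d_esym; rewrite l'_gt0 ltnS ltnW.
Qed.

(** * The marked evaluation *)

Lemma unvarK n r (j : 'I_n) (i : 'I_r) : unvar (var j i) = (j, i).
Proof. by rewrite /unvar /var /mxvec_index cast_ordK enum_rankK. Qed.

Lemma varK n r (v : 'I_(n * r)) : var (unvar v).1 (unvar v).2 = v.
Proof. by rewrite /unvar /var /mxvec_index -surjective_pairing enum_valK cast_ordKV. Qed.

Lemma mdeg_mdegr n r (m : 'X_{1..n * r}) : mdeg m = (\sum_i mdegr m i)%N.
Proof.
rewrite mdegE exchange_big pair_big /=.
rewrite (reindex (fun p : 'I_n * 'I_r => var p.1 p.2)) //=.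
exists (@unvar n r) => [p _|v _]; last exact: varK.
by rewrite unvarK -surjective_pairing.
Qed.

Definition collapse_blocks (A : comNzRingType) n r (f : {mpoly A[n * r]}) : {mpoly A[n]} :=
  f \mPo [tuple 'X_((unvar v).1) | v < n * r].

Lemma collapse_blocks_sym (A : comNzRingType) n r (f : {mpoly A[n * r]}) :
  symmetric_tensor f -> collapse_blocks f \is symmetric.
Proof.
move=> sym_f; apply/issymP => s.
rewrite /msym /collapse_blocks mmap_comp -{2}(sym_f s) /comp_mpoly [in RHS]mmap_comp.
apply: eq_mmap => // v; rewrite !tnth_mktuple !mmapXU tnth_mktuple.
by rewrite /blockperm unvarK.
Qed.

Lemma coef1_1addX_expn (R : comNzRingType) m : ((1 + 'X) ^+ m : {poly R})`_1 = m%:R.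
Proof.
elim: m => [|m IHm]; first by rewrite expr0 coef1.
rewrite exprSr mulrDr mulr1 coefD coefMX IHm -horner_coef0 !hornerE ?addr0 expr1n.
by rewrite mulrS addrC.
Qed.

Lemma mul_gcdn_eq0 (R : comNzRingType) (a : R) m n :
  a * m%:R = 0 -> a * n%:R = 0 -> a * (gcdn m n)%:R = 0.
Proof.
move=> am an; have [u [v uv]] := Bezoutz m n.
have -> : (gcdn m n)%:R = ((u * m + v * n) : int)%:~R :> R by rewrite uv.
by rewrite rmorphD !rmorphM /= mulrDr ![a * (_ * _)]mulrCA am an !mulr0 addr0.
Qed.

Lemma mul_biggcdn_eq0 (R : comNzRingType) (a : R) r (alpha : 'I_r -> nat) :
  (forall i, a * (alpha i)%:R = 0) -> a * (\big[gcdn/0%N]_(i < r) alpha i)%:R = 0.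
Proof.
move=> a_alpha; elim/big_ind: _ => [|x y|i _]; first by rewrite mulr0.
  exact: mul_gcdn_eq0.
exact: a_alpha.
Qed.

Section MarkedEvaluation.
Variables (A : comNzRingType) (n r k : nat) (alpha : 'I_r -> nat) (M : nat).
Hypothesis M_def : M = (k * \sum_i alpha i)%N.
Hypothesis M_gt0 : (0 < M)%N.
Hypothesis leMn : (M <= n)%N.
Variables (i0 : 'I_r) (j0 : 'I_n).
Hypothesis j0_eq0 : val j0 = 0%N.

Local Notation Phi := (map_poly (intr : int -> A) 'Phi_M).
Local Notation q := (\sum_i alpha i)%N.

Let monic_Phi : Phi \is monic := monic_Cyclotomic_map A M.

Definition marked_root (j : 'I_n) (i : 'I_r) : {poly {poly A}} :=
  (if (j == j0) && (i == i0) then 1 + 'X else 1) * (padded_root A M j)%:P.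

(* The value lies in A[Z][Y][X], the innermost variable being Z. *)
Definition marked_eval : {mpoly A[n * r]} -> {poly {poly {poly A}}} :=
  mmap (polyC \o polyC \o polyC) (fun v => 'X * (marked_root (unvar v).1 (unvar v).2)%:P).

HB.instance Definition _ := GRing.RMorphism.on marked_eval.

Lemma marked_evalX j i : marked_eval 'X_(var j i) = 'X * (marked_root j i)%:P.
Proof. by rewrite /marked_eval mmapXU unvarK. Qed.

Definition weight_coef (P : {mpoly A[n * r]}) : {poly A} := ((marked_eval P)`_M)`_1.

Lemma coef_marked_eval P a :
  (marked_eval P)`_a = \sum_(m <- msupp P | mdeg m == a)
      (P@_m)%:P%:P * \prod_v marked_root (unvar v).1 (unvar v).2 ^+ m v.
Proof.
rewrite /marked_eval /mmap coef_sum [RHS]big_mkcond /=; apply: eq_bigr => m _.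
rewrite coefCM (@mmap1_weighted _ _ (fun => 1%N)
  (fun v => marked_root (unvar v).1 (unvar v).2)) => [|v]; last by rewrite expr1.
rewrite (eq_bigr (fun v => m v)) => [|v _]; last exact: mul1n.
rewrite -mdegE coefXnM coefC.
case: ltnP => [lt_a_m|le_m_a]; first by rewrite ifN ?mulr0 // neq_ltn lt_a_m orbT.
case: eqP => [a_m|a_m]; first by rewrite ifT // eqn_leq le_m_a -subn_eq0 a_m.
by rewrite ifN ?mulr0 //; apply/eqP => m_a; apply: a_m; rewrite m_a subnn.
Qed.

Lemma marked_eval_coef0 P : ((marked_eval P)`_0)`_1 = 0.
Proof.
rewrite coef_marked_eval coef_sum big1 // => m /eqP /eqP; rewrite mdeg_eq0 => /eqP ->.
by rewrite big1 ?mulr1 ?coefC // => v _; rewrite mnm0E expr0.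
Qed.

Lemma marked_eval_homog_lt (h : {mpoly A[n * r]}) d :
  homog_of d h -> ltmdeg d (fun i => (k * alpha i)%N) -> (marked_eval h)`_M = 0.
Proof.
move=> hom_h [le_d [i1 ne_d]].
rewrite coef_marked_eval big_seq_cond big1 // => m /andP[m_h /eqP deg_m].
exfalso; move: deg_m; apply/eqP; rewrite neq_ltn; apply/orP; left.
rewrite mdeg_mdegr (eq_bigr _ (fun i _ => hom_h m m_h i)).
rewrite M_def big_distrr /= (bigD1 i1) //= [X in (_ < X)%N](bigD1 i1) //=.
rewrite -addSn leq_add ?ltn_neqAle ?ne_d ?le_d //.
exact: leq_sum.
Qed.

Lemma Cyclotomic_rdvdp_marked_eval_sym (f : {mpoly A[n * r]}) a : symmetric_tensor f ->
  (0 < a < M)%N -> rdvdp Phi (((marked_eval f)`_a)`_0).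
Proof.
move=> sym_f a_bounds.
have -> : ((marked_eval f)`_a)`_0 = (map_poly (horner_eval 0) (marked_eval f))`_a.
  by rewrite coef_map /= /horner_eval horner_coef0.
rewrite rmorph_mmap (eq_mmap (f2 := polyC \o polyC)
  (h2 := fun v => graded_roots A M (unvar v).1) f) => [|c|v] /=; first last.
- rewrite rmorphM /= map_polyX map_polyC /= /horner_eval /marked_root hornerM hornerC.
  by case: ifP => _; rewrite ?hornerD ?hornerX ?hornerC ?addr0 mul1r.
- by rewrite map_polyC /= /horner_eval hornerC.
have -> : mmap (polyC \o polyC) (fun v => graded_roots A M (unvar v).1) f =
          mmap (polyC \o polyC) (graded_roots A M) (collapse_blocks f).
  by rewrite mmap_comp; apply: eq_mmap => // v; rewrite tnth_mktuple mmapXU.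
exact: Cyclotomic_rdvdp_coef_sym (collapse_blocks_sym sym_f) a_bounds.
Qed.

Lemma Cyclotomic_rdvdp_weight_coefM (f g : {mpoly A[n * r]}) :
  symmetric_tensor f -> symmetric_tensor g ->
  rdvdp Phi (weight_coef f) -> rdvdp Phi (weight_coef g) -> rdvdp Phi (weight_coef (f * g)).
Proof.
move=> sym_f sym_g Phi_f Phi_g.
rewrite /weight_coef rmorphM /= coefM coef_sum.
apply: (rdvdp_sum monic_Phi) => [[a /=]]; rewrite ltnS => leaM _.
rewrite coefM big_ord_recr big_ord1 /= subn0.
have [->|a_gt0] := posnP a.
  by rewrite marked_eval_coef0 mul0r addr0 subn0; apply: (rdvdp_mull monic_Phi).
have [ltaM|] := ltnP a M.
  apply: (rdvdp_add monic_Phi).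
    by apply: (rdvdp_mulr monic_Phi); apply: Cyclotomic_rdvdp_marked_eval_sym; rewrite ?a_gt0.
  by apply: (rdvdp_mull monic_Phi); apply: Cyclotomic_rdvdp_marked_eval_sym => //; lia.
move=> leMa; have -> : a = M by apply/eqP; rewrite eqn_leq leaM leMa.
by rewrite subnn marked_eval_coef0 mulr0 add0r; apply: (rdvdp_mulr monic_Phi).
Qed.

Lemma Gamma_lt_Cyclotomic_rdvdp_weight_coef P : Gamma_lt (fun i => (k * alpha i)%N) P ->
  symmetric_tensor P /\ rdvdp Phi (weight_coef P).
Proof.
elim=> {P} [h [sym_h [d [lt_d hom_h]]] | c | f g _ [sym_f Phi_f] _ [sym_g Phi_g]
           | f g _ [sym_f Phi_f] _ [sym_g Phi_g]].
- by rewrite /weight_coef (marked_eval_homog_lt hom_h lt_d) coef0 rdvdp0.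
- split; first by move=> s; rewrite comp_mpolyC.
  by rewrite /weight_coef /marked_eval mmapC /= !coefC ifN ?coef0 ?rdvdp0 // -lt0n.
- split; first by move=> s; rewrite comp_mpolyD sym_f sym_g.
  by rewrite /weight_coef rmorphD /= !coefD; apply: (rdvdp_add monic_Phi).
- split; first by move=> s; rewrite rmorphM /= sym_f sym_g.
  exact: Cyclotomic_rdvdp_weight_coefM.
Qed.

Lemma prod_marked_root (j : 'I_n) :
  \prod_(i < r) marked_root j i ^+ alpha i =
  (if j == j0 then (1 + 'X) ^+ alpha i0 else 1) * (padded_root A M j ^+ q)%:P.
Proof.
rewrite /marked_root (eq_bigr (fun i => (if (j == j0) && (i == i0) then 1 + 'X else 1) ^+ alpha i
  * (padded_root A M j)%:P ^+ alpha i)) => [|i _]; last exact: exprMn.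
rewrite big_split /= -prodrXr rmorph_prod; congr (_ * _); last first.
  by apply: eq_bigr => i _; rewrite rmorphXn.
case: eqP => _ /=; last by rewrite big1 // => i _; rewrite expr1n.
by rewrite (bigD1 i0) //= eqxx big1 ?mulr1 // => i /negbTE ->; rewrite expr1n.
Qed.

Lemma weight_coef_gamma_prod : weight_coef (gamma_prod A n k alpha) =
  (alpha i0)%:R * elem_sym_at (fun j => padded_root A M j ^+ q) j0 k.
Proof.
rewrite /weight_coef /gamma_prod rmorph_sum /= !coef_sum /elem_sym_at mulr_sumr.
rewrite [RHS]big_mkcondr /=; apply: eq_bigr => S /eqP card_S.
have marked_block j : marked_eval (\prod_(i < r) 'X_(var j i) ^+ alpha i) =
    'X^q * (\prod_(i < r) marked_root j i ^+ alpha i)%:P.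
  rewrite rmorph_prod /= (eq_bigr (fun i => 'X ^+ alpha i * (marked_root j i ^+ alpha i)%:P)).
    by rewrite big_split /= prodrXr rmorph_prod.
  by move=> i _; rewrite rmorphXn /= marked_evalX exprMn rmorphXn.
rewrite rmorph_prod (eq_bigr _ (fun j _ => marked_block j)) big_split /= prodr_const.
rewrite -exprM -rmorph_prod /= coefXnM card_S mulnC -M_def ltnn subnn coefC /=.
rewrite (eq_bigr _ (fun j _ => prod_marked_root j)) big_split /= -rmorph_prod coefMC.
case: (boolP (j0 \in S)) => [j0_S|j0_S].
  rewrite (bigD1 j0) //= eqxx big1 ?mulr1 ?coef1_1addX_expn // => j /andP[_ /negbTE->].
  by [].
by rewrite big1 ?coef1 ?mul0r // => j j_S; case: eqP j_S => // ->; rewrite (negbTE j0_S).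
Qed.

Lemma Cyclotomic_rdvdp_weight_coef_gamma_prod :
  rdvdp Phi (weight_coef (gamma_prod A n k alpha) - ((alpha i0)%:R * (-1) ^+ k.-1)%:P).
Proof.
have [k_gt0 q_gt0] : (0 < k)%N /\ (0 < q)%N.
  by apply/andP; rewrite -muln_gt0 -M_def.
rewrite weight_coef_gamma_prod rmorphM /= polyC_natr rmorph_sign -mulrBr.
apply: (rdvdp_mull monic_Phi); apply: rdvdp_elem_sym_at_sign => // [|l /andP[l_gt0 ltlk]].
  by rewrite /padded_root j0_eq0 M_gt0 expr0 expr1n.
apply: Cyclotomic_rdvdp_elem_sym_pow => //.
by rewrite muln_gt0 q_gt0 l_gt0 M_def [(k * q)%N]mulnC ltn_pmul2l.
Qed.

Lemma gamma_prod_annihilator (a : A) :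
  Gamma_lt (fun i => (k * alpha i)%N) (a *: gamma_prod A n k alpha) ->
  a * (alpha i0)%:R = 0.
Proof.
move=> /Gamma_lt_Cyclotomic_rdvdp_weight_coef [_].
set W := weight_coef (gamma_prod A n k alpha); set c := (alpha i0)%:R * (-1) ^+ k.-1 : A.
have -> : weight_coef (a *: gamma_prod A n k alpha) = a%:P * W.
  by rewrite /weight_coef /marked_eval mmapZ /= !coefCM.
move=> Phi_aW; have : rdvdp Phi (a * c)%:P.
  rewrite -[(a * c)%:P](addrNK (a%:P * W)) polyCM -mulrBr -opprB mulrN.
  apply: (rdvdp_add monic_Phi) => //; apply/(rdvdp_opp monic_Phi)/(rdvdp_mull monic_Phi).
  exact: Cyclotomic_rdvdp_weight_coef_gamma_prod.
move=> /(rdvdp_polyC (size_Cyclotomic_map_gt1 A M_gt0)) /(congr1 (fun y => y * (-1) ^+ k.-1)).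
by rewrite mul0r /c mulrA -!mulrA -exprMn mulrNN mulr1 expr1n mulr1.
Qed.

End MarkedEvaluation.

Theorem proposition7p13 (A : comNzRingType) (r : nat) (k : nat) (n : nat)
    (alpha : 'I_r -> nat) (a : A) :
  (1 <= r)%N -> (1 <= k)%N ->
  (exists i, alpha i != 0%N) ->
  (exists b : A, b * ((\big[gcdn/0%N]_(i < r) alpha i)%:R) = 1) ->
  (k * (\sum_(i < r) alpha i) <= n)%N ->
  Gamma_lt (fun i => (k * alpha i)%N) (a *: gamma_prod A n k alpha) ->
  a = 0.
Proof.
move=> _ k_gt0 [i1 alpha_i1] [b b_gcd] leMn Gamma_a.
set M := (k * \sum_(i < r) alpha i)%N in leMn.
have M_gt0 : (0 < M)%N by rewrite muln_gt0 k_gt0 (bigD1 i1) //= addn_gt0 lt0n alpha_i1.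
have n_gt0 : (0 < n)%N := leq_trans M_gt0 leMn.
have a_alpha j : a * (alpha j)%:R = 0.
  exact: (@gamma_prod_annihilator A n r k alpha M erefl M_gt0 leMn j (Ordinal n_gt0)).
by rewrite -[a]mulr1 -b_gcd mulrCA (mul_biggcdn_eq0 a_alpha) mulr0.
Qed.
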